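(* Let the Markov jump process on the finite set $K$ with rates $W$ be irreducible with stationary distribution $\rho$, let $V:K\to\mathbb{R}$ and $b\in\mathbb{R}$. For small $h\in\mathbb{R}$ let $\mu=\mu_h$ be the stationary distribution of the perturbed dynamics with rates $W(x,y)e^{\frac{bh}{2}[V(y)-V(x)]}$. Then the dynamical fluctuation functional satisfies, as $h\to0$, \[ I(\mu)=-\frac{bh}{4}\sum_x\mu(x)\,LV(x)+o(h^2). \]
   Context: $W(x,y)\ge0$ are transition rates with backward generator $Lf(x)=\sum_yW(x,y)[f(y)-f(x)]$. For a probability distribution $\mu$ on $K$, the (Donsker–Varadhan) dynamical fluctuation functional of the occupation-time empirical distribution is $I(\mu)=-\inf_{g>0}\sum_x\mu(x)\frac{Lg(x)}{g(x)}$, the infimum over strictly positive functions $g:K\to\mathbb{R}$. *)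

From Stdlib Require Import Reals Lra List Relations ClassicalEpsilon.
Open Scope R_scope.

Definition sumK (n : nat) (f : nat -> R) : R :=
  fold_right Rplus 0 (map f (seq 0 n)).

Definition gen (n : nat) (W : nat -> nat -> R) (f : nat -> R) (x : nat) : R :=
  sumK n (fun y => W x y * (f y - f x)).

Definition rates (n : nat) (W : nat -> nat -> R) : Prop :=
  forall x y, (x < n)%nat -> (y < n)%nat -> 0 <= W x y.

Definition jump (n : nat) (W : nat -> nat -> R) (x y : nat) : Prop :=
  (x < n)%nat /\ (y < n)%nat /\ 0 < W x y.

Definition irreducible (n : nat) (W : nat -> nat -> R) : Prop :=
  forall x y, (x < n)%nat -> (y < n)%nat -> x <> y ->
    clos_trans nat (jump n W) x y.

Definition distribution (n : nat) (mu : nat -> R) : Prop :=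
  (forall x, (x < n)%nat -> 0 <= mu x) /\ sumK n mu = 1.

Definition stationary (n : nat) (W : nat -> nat -> R) (mu : nat -> R) : Prop :=
  distribution n mu /\ forall f : nat -> R, sumK n (fun x => mu x * gen n W f x) = 0.

Definition DVset (n : nat) (W : nat -> nat -> R) (mu : nat -> R) (r : R) : Prop :=
  exists g : nat -> R, (forall x, (x < n)%nat -> 0 < g x) /\
    r = - sumK n (fun x => mu x * gen n W g x / g x).

(* Donsker-Varadhan functional I(mu) = - inf_{g>0} sum_x mu(x) Lg(x)/g(x),
   i.e. the least upper bound of DVset (chosen by classical description). *)
Definition DVI (n : nat) (W : nat -> nat -> R) (mu : nat -> R) : R :=
  epsilon (inhabits 0) (fun v => is_lub (DVset n W mu) v).

Definition pert (W : nat -> nat -> R) (V : nat -> R) (b h : R) (x y : nat) : R :=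
  W x y * exp (b * h / 2 * (V y - V x)).

From Stdlib Require Import Reals Lra Lia List ClassicalEpsilon.
From Coquelicot Require Import Coquelicot.
Open Scope R_scope.

(* Write c = b h / 2 and D(x,y) = V(y) - V(x).  The perturbed rates are
   W(x,y) e^{c D(x,y)}, and mu is their stationary law.
   1. Variational step: the infimum defining I(mu) is attained at g = e^{cV}.
      Indeed for any g > 0, writing g = e^{cV + w}, the inequality e^t >= 1 + t
      and stationarity of mu tested on w show that e^{cV} is optimal, so
        I(mu) = - sum_x mu(x) sum_y W(x,y) (e^{c D(x,y)} - 1).
   2. Exact remainder: testing stationarity on V gives
        I(mu) + (c/2) sum_x mu(x) LV(x)
          = sum_x mu(x) sum_y W(x,y) psi(c D(x,y)),
      with psi(t) = 1 + t/2 + e^t (t/2 - 1).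
   3. Calculus: psi(0) = psi'(0) = 0 and |psi''(t)| <= e |t| on [-1, 1], so
      two applications of the mean value theorem give |psi(t)| <= e |t|^3 for
      |t| <= 1; hence the remainder is O(h^3), in particular o(h^2). *)

Definition lsum (l : list nat) (f : nat -> R) : R := fold_right Rplus 0 (map f l).

Lemma lsum_le l f g : (forall x, In x l -> f x <= g x) -> lsum l f <= lsum l g.
Proof.
  unfold lsum; induction l as [|a l IH]; simpl; intros H; [lra|].
  assert (f a <= g a) by auto.
  assert (fold_right Rplus 0 (map f l) <= fold_right Rplus 0 (map g l)) by auto.
  lra.
Qed.

Lemma lsum_nonneg l f : (forall x, In x l -> 0 <= f x) -> 0 <= lsum l f.
Proof.
  unfold lsum; induction l as [|a l IH]; simpl; intros H; [lra|].
  assert (0 <= f a) by auto. assert (0 <= fold_right Rplus 0 (map f l)) by auto.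
  lra.
Qed.

Lemma lsum_term l f y :
  (forall x, In x l -> 0 <= f x) -> In y l -> f y <= lsum l f.
Proof.
  unfold lsum; induction l as [|a l IH]; simpl; intros H Hy; [contradiction|].
  assert (Htail : 0 <= fold_right Rplus 0 (map f l)) by (apply lsum_nonneg; auto).
  destruct Hy as [<-|Hy].
  - lra.
  - assert (0 <= f a) by auto. assert (f y <= fold_right Rplus 0 (map f l)) by auto.
    lra.
Qed.

Lemma inK n x : In x (seq 0 n) <-> (x < n)%nat.
Proof. rewrite in_seq; lia. Qed.

Lemma sumK_ext n f g : (forall x, (x < n)%nat -> f x = g x) -> sumK n f = sumK n g.
Proof. intros H; unfold sumK; f_equal; apply map_ext_in; intros x Hx%inK; auto. Qed.

Lemma sumK_plus n f g : sumK n (fun x => f x + g x) = sumK n f + sumK n g.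
Proof. unfold sumK; induction (seq 0 n); simpl; lra. Qed.

Lemma sumK_scal n c f : sumK n (fun x => c * f x) = c * sumK n f.
Proof. unfold sumK; induction (seq 0 n); simpl; lra. Qed.

Lemma sumK_abs n f : Rabs (sumK n f) <= sumK n (fun x => Rabs (f x)).
Proof.
  unfold sumK; induction (seq 0 n); simpl.
  - rewrite Rabs_R0; lra.
  - eapply Rle_trans; [apply Rabs_triang | lra].
Qed.

Lemma sumK_le n f g : (forall x, (x < n)%nat -> f x <= g x) -> sumK n f <= sumK n g.
Proof. intros H; apply lsum_le; intros x Hx%inK; auto. Qed.

Lemma sumK_term n f y :
  (forall x, (x < n)%nat -> 0 <= f x) -> (y < n)%nat -> f y <= sumK n f.
Proof. intros H Hy; apply lsum_term; [intros x Hx%inK; auto | apply inK; auto]. Qed.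

Lemma sumK_nonneg n f : (forall x, (x < n)%nat -> 0 <= f x) -> 0 <= sumK n f.
Proof. intros H; apply lsum_nonneg; intros x Hx%inK; auto. Qed.

Definition psi (t : R) : R := 1 + /2 * t + exp t * (/2 * t - 1).
Definition psi' (t : R) : R := /2 + exp t * (/2 * t - /2).
Definition psi'' (t : R) : R := exp t * (/2 * t).

Lemma derive_psi x : derivable_pt_lim psi x (psi' x).
Proof. apply is_derive_Reals; unfold psi, psi'; auto_derive; [auto | field]. Qed.

Lemma derive_psi' x : derivable_pt_lim psi' x (psi'' x).
Proof. apply is_derive_Reals; unfold psi', psi''; auto_derive; [auto | field]. Qed.

Lemma mvt_from_origin (g g' : R -> R) t :
  (forall c, derivable_pt_lim g c (g' c)) ->
  exists c, Rabs c <= Rabs t /\ g t - g 0 = g' c * t.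
Proof.
  intros Hd. destruct (Rtotal_order t 0) as [Hlt|[->|Hgt]].
  - destruct (MVT_cor2 g g' t 0 Hlt (fun c _ => Hd c)) as [c [Hc Hci]].
    exists c; split; [rewrite !Rabs_left; lra | lra].
  - exists 0; split; [lra | ring].
  - destruct (MVT_cor2 g g' 0 t Hgt (fun c _ => Hd c)) as [c [Hc Hci]].
    exists c; split; [rewrite !Rabs_right; lra | lra].
Qed.

Lemma vanishing_order (g g' : R -> R) (K : R) (k : nat) :
  0 <= K -> g 0 = 0 ->
  (forall c, derivable_pt_lim g c (g' c)) ->
  (forall c, Rabs c <= 1 -> Rabs (g' c) <= K * Rabs c ^ k) ->
  forall t, Rabs t <= 1 -> Rabs (g t) <= K * Rabs t ^ S k.
Proof.
  intros HK Hg0 Hd Hb t Ht.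
  destruct (mvt_from_origin g g' t Hd) as [c [Hct Hmvt]].
  rewrite Hg0, Rminus_0_r in Hmvt. rewrite Hmvt, Rabs_mult, <- tech_pow_Rmult.
  assert (Hck : Rabs c ^ k <= Rabs t ^ k) by (apply pow_incr; split; [apply Rabs_pos | lra]).
  assert (Hg' : Rabs (g' c) <= K * Rabs t ^ k).
  { eapply Rle_trans; [apply Hb; lra | apply Rmult_le_compat_l; auto]. }
  pose proof (Rabs_pos t). pose proof (Rabs_pos (g' c)). nra.
Qed.

Lemma psi_cubic t : Rabs t <= 1 -> Rabs (psi t) <= exp 1 * Rabs t ^ 3.
Proof.
  assert (He : 0 <= exp 1) by (left; apply exp_pos).
  apply (vanishing_order psi psi' (exp 1) 2); auto.
  - unfold psi; rewrite exp_0; ring.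
  - apply derive_psi.
  - apply (vanishing_order psi' psi'' (exp 1) 1); auto.
    + unfold psi'; rewrite exp_0; ring.
    + apply derive_psi'.
    + intros c Hc. unfold psi''.
      assert (Hexp : exp c <= exp 1).
      { destruct (Req_dec c 1) as [->|Hne]; [lra|].
        left; apply exp_increasing; apply Rabs_le_between in Hc; lra. }
      rewrite Rabs_mult, Rabs_mult, (Rabs_right (exp c)) by (left; apply exp_pos).
      rewrite (Rabs_right (/2)) by lra.
      pose proof (Rabs_pos c). pose proof (exp_pos c). simpl. nra.
Qed.

Section Fluctuation.

Variables (n : nat) (W : nat -> nat -> R).
Hypothesis hW : rates n W.

Lemma weighted_gen_ratio m g x : 0 < g x ->
  m * gen n W g x / g x = m * sumK n (fun y => W x y * (g y / g x - 1)).
Proof.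
  intros Hg. unfold gen, Rdiv. rewrite Rmult_assoc, (Rmult_comm _ (/ g x)), <- sumK_scal.
  f_equal. apply sumK_ext; intros y _; field; lra.
Qed.

Lemma DVI_attained mu S :
  DVset n W mu S -> is_upper_bound (DVset n W mu) S -> DVI n W mu = S.
Proof.
  intros Hin Hub.
  assert (Hlub : is_lub (DVset n W mu) S) by (split; [auto | intros r Hr; apply Hr, Hin]).
  unfold DVI. apply (is_lub_u (DVset n W mu)); [|exact Hlub].
  apply (epsilon_spec (inhabits 0) (fun v => is_lub (DVset n W mu) v)).
  exists S; exact Hlub.
Qed.

(* The value -sum_x mu(x) Lg(x)/g(x) of the Donsker-Varadhan expression at
   the exponential test function g = e^{cV}. *)
Definition tilt_value (V : nat -> R) (c : R) (mu : nat -> R) : R :=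
  - sumK n (fun x => mu x * sumK n (fun y => W x y * (exp (c * (V y - V x)) - 1))).

Lemma tilt_value_in_DVset V c mu : DVset n W mu (tilt_value V c mu).
Proof.
  exists (fun z => exp (c * V z)); split; [intros; apply exp_pos|].
  unfold tilt_value. f_equal. apply sumK_ext; intros x _.
  rewrite weighted_gen_ratio by apply exp_pos. f_equal. apply sumK_ext; intros y _.
  unfold Rdiv; rewrite <- exp_Ropp, <- exp_plus. do 3 f_equal. ring.
Qed.

(* Optimality of e^{cV} when mu is stationary for the rates W e^{cD}, c = bh/2:
   write any g > 0 as e^{cV + w}; then e^t >= 1 + t bounds the ratio terms,
   and stationarity tested on w kills the resulting linear term. *)
Lemma tilt_value_upper V b h mu : stationary n (pert W V b h) mu ->
  is_upper_bound (DVset n W mu) (tilt_value V (b * h / 2) mu).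
Proof.
  intros [[Hmu _] Hstat] r [g [Hg ->]]. set (c := b * h / 2).
  unfold tilt_value. apply Ropp_le_contravar.
  set (w := fun z => ln (g z) - c * V z).
  rewrite <- (Rplus_0_r (sumK n _)), <- (Hstat w), <- sumK_plus.
  apply sumK_le; intros x Hx.
  rewrite weighted_gen_ratio, <- Rmult_plus_distr_l by auto.
  apply Rmult_le_compat_l; [auto|].
  unfold gen, pert; rewrite <- sumK_plus. apply sumK_le; intros y Hy.
  assert (Hratio : g y / g x = exp (c * (V y - V x)) * exp (w y - w x)).
  { rewrite <- exp_plus; unfold w.
    replace (c * (V y - V x) + (ln (g y) - c * V y - (ln (g x) - c * V x)))
      with (ln (g y) + - ln (g x)) by ring.
    rewrite exp_plus, exp_Ropp, !exp_ln by auto. reflexivity. }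
  rewrite Hratio.
  assert (HWE : 0 <= W x y * exp (c * (V y - V x)))
    by (apply Rmult_le_pos; [apply hW; auto | left; apply exp_pos]).
  pose proof (exp_ineq1_le (w y - w x)). fold c. nra.
Qed.

Lemma DVI_tilted V b h mu : stationary n (pert W V b h) mu ->
  DVI n W mu = tilt_value V (b * h / 2) mu.
Proof.
  intros Hst. apply DVI_attained; [apply tilt_value_in_DVset | apply tilt_value_upper; auto].
Qed.

(* Step 2: the exact remainder of the first-order formula, obtained by also
   testing stationarity on V. *)
Lemma remainder_identity V b h mu : stationary n (pert W V b h) mu ->
  DVI n W mu - (- (b * h / 4) * sumK n (fun x => mu x * gen n W V x))
  = sumK n (fun x => mu x * sumK n (fun y => W x y * psi (h * (b / 2 * (V y - V x))))).
Proof.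
  intros Hst. rewrite (DVI_tilted V b h mu Hst). unfold tilt_value.
  pose proof (proj2 Hst V) as HV. unfold gen, pert in HV.
  set (c := b * h / 2) in *.
  replace (b * h / 4) with (c / 2) by (unfold c; field).
  transitivity (sumK n (fun x =>
      (-1) * (mu x * sumK n (fun y => W x y * (exp (c * (V y - V x)) - 1)))
      + c / 2 * (mu x * gen n W V x)
      + c / 2 * (mu x * sumK n (fun y => W x y * exp (c * (V y - V x)) * (V y - V x))))).
  { rewrite !sumK_plus, !sumK_scal, HV. ring. }
  apply sumK_ext; intros x _. unfold gen.
  transitivity (mu x * sumK n (fun y =>
      (-1) * (W x y * (exp (c * (V y - V x)) - 1))
      + c / 2 * (W x y * (V y - V x))
      + c / 2 * (W x y * exp (c * (V y - V x)) * (V y - V x)))).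
  { rewrite !sumK_plus, !sumK_scal. ring. }
  f_equal. apply sumK_ext; intros y _. unfold psi.
  replace (h * (b / 2 * (V y - V x))) with (c * (V y - V x)) by (unfold c; field).
  field.
Qed.

Lemma mass_le_one mu x : distribution n mu -> (x < n)%nat -> mu x <= 1.
Proof. intros [Hpos Hsum] Hx. rewrite <- Hsum. apply sumK_term; auto. Qed.

Lemma entry_le_total (a : nat -> nat -> R) x y : (x < n)%nat -> (y < n)%nat ->
  Rabs (a x y) <= sumK n (fun x => sumK n (fun y => Rabs (a x y))).
Proof.
  intros Hx Hy.
  apply Rle_trans with (sumK n (fun y => Rabs (a x y))).
  - apply (sumK_term n (fun y => Rabs (a x y))); auto using Rabs_pos.
  - apply (sumK_term n (fun x => sumK n (fun y => Rabs (a x y)))); auto.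
    intros; apply sumK_nonneg; auto using Rabs_pos.
Qed.

(* Step 3: uniformly over probability distributions mu, the remainder
   sum_x mu(x) sum_y W(x,y) psi(h a(x,y)) is O(|h|^3); the admissible range
   of h keeps every argument of psi inside [-1, 1]. *)
Lemma remainder_cubic (a : nat -> nat -> R) :
  exists Q r, 0 <= Q /\ 0 < r /\ forall h mu, Rabs h < r -> distribution n mu ->
    Rabs (sumK n (fun x => mu x * sumK n (fun y => W x y * psi (h * a x y))))
      <= Q * Rabs h ^ 3.
Proof.
  set (B := sumK n (fun x => sumK n (fun y => Rabs (a x y))) + 1).
  set (Q := sumK n (fun x => sumK n (fun y => W x y * (exp 1 * Rabs (a x y) ^ 3)))).
  assert (HB : 1 <= B).
  { assert (0 <= sumK n (fun x => sumK n (fun y => Rabs (a x y)))); [|unfold B; lra].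
    apply sumK_nonneg; intros; apply sumK_nonneg; auto using Rabs_pos. }
  assert (HWpos : forall x y, (x < n)%nat -> (y < n)%nat ->
                    0 <= W x y * (exp 1 * Rabs (a x y) ^ 3)).
  { intros x y Hx Hy. apply Rmult_le_pos; [apply hW; auto|].
    apply Rmult_le_pos; [left; apply exp_pos | apply pow_le, Rabs_pos]. }
  exists Q, (/ B). split; [|split].
  - apply sumK_nonneg; intros x Hx; apply sumK_nonneg; auto.
  - apply Rinv_0_lt_compat; lra.
  - intros h mu Hh Hmu.
    assert (HhB : Rabs h * B < 1).
    { apply (Rmult_lt_compat_r B) in Hh; [|lra]. rewrite Rinv_l in Hh; lra. }
    assert (Harg : forall x y, (x < n)%nat -> (y < n)%nat -> Rabs (h * a x y) <= 1).
    { intros x y Hx Hy. rewrite Rabs_mult.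
      pose proof (entry_le_total a x y Hx Hy). pose proof (Rabs_pos h).
      pose proof (Rabs_pos (a x y)). unfold B in HhB. nra. }
    eapply Rle_trans; [apply sumK_abs|]. unfold Q; rewrite Rmult_comm, <- sumK_scal.
    apply sumK_le; intros x Hx.
    rewrite Rabs_mult, (Rabs_right (mu x)) by (apply Rle_ge, (proj1 Hmu); auto).
    apply Rle_trans with (1 * sumK n (fun y => Rabs (W x y * psi (h * a x y)))).
    { apply Rmult_le_compat; auto using Rabs_pos, sumK_abs, mass_le_one.
      apply (proj1 Hmu); auto. }
    rewrite Rmult_1_l, <- sumK_scal. apply sumK_le; intros y Hy.
    rewrite Rabs_mult, (Rabs_right (W x y)) by (apply Rle_ge, hW; auto).
    eapply Rle_trans.
    { apply Rmult_le_compat_l; [apply hW; auto | apply psi_cubic, Harg; auto]. }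
    rewrite Rabs_mult, Rpow_mult_distr. right; ring.
Qed.

End Fluctuation.

Theorem proposition3 (n : nat) (W : nat -> nat -> R) (V : nat -> R) (b : R)
  (mu : R -> nat -> R)
  (hW : rates n W) (hirr : irreducible n W)
  (hmu : exists h0, 0 < h0 /\
           forall h, Rabs h < h0 -> stationary n (pert W V b h) (mu h)) :
  forall eps, 0 < eps -> exists delta, 0 < delta /\
    forall h, 0 < Rabs h < delta ->
      Rabs (DVI n W (mu h)
            - (- (b * h / 4) * sumK n (fun x => mu h x * gen n W V x)))
        <= eps * h ^ 2.
Proof.
  intros eps Heps. destruct hmu as [h0 [Hh0 Hst]].
  destruct (remainder_cubic n W hW (fun x y => b / 2 * (V y - V x)))
    as [Q [r [HQ [Hr Hcubic]]]].
  exists (Rmin h0 (Rmin r (eps / (Q + 1)))). split.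
  { repeat apply Rmin_pos; auto. apply Rdiv_lt_0_compat; lra. }
  intros h [_ Hh].
  apply Rmin_Rgt in Hh as [Hh0' Hh]. apply Rmin_Rgt in Hh as [Hr' Heps'].
  rewrite (remainder_identity n W hW V b h (mu h) (Hst h Hh0')).
  eapply Rle_trans; [apply (Hcubic h (mu h) Hr' (proj1 (Hst h Hh0')))|].
  assert (HhQ : Rabs h * Q <= eps).
  { apply (Rmult_lt_compat_r (Q + 1)) in Heps'; [|lra].
    unfold Rdiv in Heps'; rewrite Rmult_assoc, Rinv_l in Heps' by lra.
    pose proof (Rabs_pos h). nra. }
  rewrite <- (pow2_abs h). pose proof (Rabs_pos h).
  replace (Q * Rabs h ^ 3) with ((Rabs h * Q) * Rabs h ^ 2) by ring.
  apply Rmult_le_compat_r; [apply pow_le|]; auto.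
Qed.
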